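(* Fix an integer $k\geq1$ and $V=\{0,\ldots,k\}$. If a Boolean function $\varphi$ on $V$ satisfies $\mathrm{eul}(\varphi)=0$, then $\varphi\simeq\bot$.
   Context: A valuation is a subset $\nu\subseteq V$; $\nu^{(l)}$ is $\nu$ with membership of $l$ flipped. A Boolean function on $V$ is a map $\varphi:2^V\to\{\text{false},\text{true}\}$; $\mathrm{sat}(\varphi)$ is its set of satisfying valuations; $\mathrm{eul}(\varphi)=\sum_{\nu\in\mathrm{sat}(\varphi)}(-1)^{|\nu|}$; $\bot$ is the constant-false function. Write $\varphi\xrightarrow{+(\nu,l)}\varphi'$ if $\nu,\nu^{(l)}\notin\mathrm{sat}(\varphi)$ and $\mathrm{sat}(\varphi')=\mathrm{sat}(\varphi)\cup\{\nu,\nu^{(l)}\}$, and $\varphi\xrightarrow{-(\nu,l)}\varphi'$ if $\varphi'\xrightarrow{+(\nu,l)}\varphi$. Write $\varphi\xrightarrow{\pm}\varphi'$ if one of these holds for some $\nu,l$; $\simeq$ is the reflexive-transitive closure of $\xrightarrow{\pm}$ (an equivalence relation). *)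

From mathcomp Require Import all_boot all_order all_algebra.
From Stdlib Require Import Relations.
Set Implicit Arguments. Unset Strict Implicit. Unset Printing Implicit Defensive.
Import GRing.Theory Num.Theory.

(* Variables V = {0,...,k} are represented by the finite type 'I_(k.+1).
   A valuation is a subset nu : {set 'I_(k.+1)}.
   A Boolean function is a map phi : {set 'I_(k.+1)} -> bool. *)

Section BoolFun.
Variable k : nat.
Notation V := 'I_(k.+1).

Definition bfun := {set V} -> bool.

Definition flip (nu : {set V}) (l : V) : {set V} :=
  if l \in nu then nu :\ l else l |: nu.

Definition sat (phi : bfun) : {set {set V}} := [set nu | phi nu].

Definition eul (phi : bfun) : int :=
  (\sum_(nu in sat phi) (-1) ^+ #|nu|)%R.

Definition bot : bfun := fun _ => false.

Definition step_plus (nu : {set V}) (l : V) (phi phi' : bfun) : Prop :=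
  nu \notin sat phi /\ flip nu l \notin sat phi /\
  sat phi' = sat phi :|: [set nu; flip nu l].

Definition step_minus (nu : {set V}) (l : V) (phi phi' : bfun) : Prop :=
  step_plus nu l phi' phi.

Definition step_pm (phi phi' : bfun) : Prop :=
  exists nu l, step_plus nu l phi phi' \/ step_minus nu l phi phi'.

Definition bequiv : bfun -> bfun -> Prop := clos_refl_trans bfun step_pm.
End BoolFun.

From mathcomp Require Import all_boot all_order all_algebra.
From mathcomp Require Import zify.
From Stdlib Require Import Relations.
Import GRing.Theory Num.Theory.

Set Implicit Arguments. Unset Strict Implicit. Unset Printing Implicit Defensive.

(* Toggling two valuations x, y with equal values is a move of [bequiv]
   whenever |x ∆ y| is odd: for |x ∆ y| = 1 it is a single step, and otherwise
   one walks two steps from x towards y and combines the three toggles of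
   the path x - a - b - y, in an order depending on the values at a and b,
   with induction for the pair (b, y).  If eul φ = 0 and φ is not ⊥, the
   satisfying valuations of φ cannot all have the same parity, so toggling
   one pair of opposite parity lowers |sat φ| and keeps eul φ = 0. *)

Lemma add_signr_odd_neq (R : nzRingType) m n :
  odd m != odd n -> ((-1) ^+ m + (-1) ^+ n = 0 :> R)%R.
Proof.
rewrite -signr_odd -[((-1) ^+ n)%R]signr_odd.
by case: (odd m); case: (odd n) => //= _; rewrite ?addNr ?subrr.
Qed.

Section Toggling.
Variable k : nat.
Notation V := 'I_(k.+1).
Implicit Types (f g : bfun k) (x y a b : {set V}) (l : V).

Definition toggle f x : bfun k := fun z => (z == x) (+) f z.

(* Stated pointwise in [g], since [bequiv] compares functions and we avoid
   function extensionality. *)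
Definition togglable x y :=
  forall f g, f x = f y -> g =1 toggle (toggle f x) y -> bequiv f g.

Definition symdiff x y : {set V} := (x :\: y) :|: (y :\: x).

Lemma in_symdiff x y z : (z \in symdiff x y) = (z \in x) (+) (z \in y).
Proof. by rewrite !inE; case: (z \in x); case: (z \in y). Qed.

Lemma in_flip x l z : (z \in flip x l) = (z == l) (+) (z \in x).
Proof.
by rewrite /flip; case: ifP => lx; rewrite !inE; case: eqVneq => [->|] //=;
  rewrite lx.
Qed.

Lemma flip_neq x l : flip x l != x.
Proof. by apply/negP=> /eqP/setP/(_ l); rewrite in_flip eqxx; case: (l \in x). Qed.

Lemma card_flip x l : #|flip x l| = if l \in x then #|x|.-1 else #|x|.+1.
Proof.
rewrite /flip; case: ifP => lx; last by rewrite cardsU1 lx.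
by rewrite [in RHS](cardsD1 l) lx.
Qed.

Lemma symdiff_flipl x y l : symdiff (flip x l) y = flip (symdiff x y) l.
Proof. by apply/setP=> z; rewrite in_symdiff !in_flip in_symdiff addbA. Qed.

Lemma symdiffxx x : symdiff x x = set0.
Proof. by apply/setP=> z; rewrite in_symdiff addbb inE. Qed.

Lemma symdiff_set1_flip x y l : symdiff x y = [set l] -> y = flip x l.
Proof.
move=> /setP symdiff_xy; apply/setP=> z.
by rewrite in_flip -in_set1 -symdiff_xy in_symdiff addbAC addbb.
Qed.

Lemma odd_card_symdiff x y : odd #|symdiff x y| = odd #|x| (+) odd #|y|.
Proof.
rewrite cardsU (_ : _ :&: _ = set0); last first.
  by apply/setP=> z; rewrite !inE; case: (z \in x); case: (z \in y).
rewrite cards0 subn0 -(cardsID y x) -(cardsID x y) setIC !oddD.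
by case: (odd _); case: (odd _); case: (odd _).
Qed.

Lemma bequiv_toggle_trans x y f g : togglable x y -> f x = f y ->
  bequiv (toggle (toggle f x) y) g -> bequiv f g.
Proof. by move=> Txy fxy; apply: rt_trans; apply: Txy. Qed.

Lemma togglable_flip x l : togglable x (flip x l).
Proof.
move=> f g fxy Dg; set y := flip x l in fxy Dg *.
have yx : y != x := flip_neq x l.
have gx : g x = ~~ f x by rewrite Dg /toggle eqxx eq_sym (negbTE yx).
have gy : g y = ~~ f y by rewrite Dg /toggle eqxx (negbTE yx).
have sat_fg : sat f :|: [set x; y] = sat g :|: [set x; y].
  apply/setP=> z; rewrite !inE Dg /toggle.
  by case: (z == x); case: (z == y); rewrite ?orbT //= orbF.
apply: rt_step; exists x, l; rewrite /step_minus /step_plus -/y.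
case fx: (f x) in fxy gx gy.
- right; split; [|split]; rewrite ?inE ?gx ?gy -?fxy //.
  rewrite -sat_fg; apply/esym/setUidPl.
  by rewrite subUset !sub1set !inE -fxy fx.
- left; split; [|split]; rewrite ?inE ?fx -?fxy //.
  rewrite sat_fg; apply/esym/setUidPl.
  by rewrite subUset !sub1set !inE gx gy -fxy.
Qed.

Lemma togglable_chain x a b y : uniq [:: x; a; b; y] ->
  togglable x a -> togglable a b -> togglable b y -> togglable x y.
Proof.
rewrite /= !inE !negb_or -!andbA andbT => /and5P[xa xb xy ab /andP[ay b_y]].
move=> Txa Tab Tby f g fxy Dg.
have neqF (u v : {set V}) : u != v -> ((u == v) = false) * ((v == u) = false).
  by move=> uv; rewrite [v == u]eq_sym (negbTE uv).
have ne := (neqF _ _ xa, neqF _ _ xb, neqF _ _ xy,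
            neqF _ _ ab, neqF _ _ ay, neqF _ _ b_y).
have fval c : f c = f x \/ f c = ~~ f x by case: (f c); case: (f x); auto.
(* In each case some order of the three adjacent toggles meets equal values
   every time; a and b are toggled twice, so the net effect is on x and y. *)
have [fa|fa] := fval a; have [fb|fb] := fval b; [
  apply: (bequiv_toggle_trans Tby); last apply: (bequiv_toggle_trans Txa); last apply: Tab |
  apply: (bequiv_toggle_trans Txa); last apply: (bequiv_toggle_trans Tab); last apply: Tby |
  apply: (bequiv_toggle_trans Tby); last apply: (bequiv_toggle_trans Tab); last apply: Txa |
  apply: (bequiv_toggle_trans Tab); last apply: (bequiv_toggle_trans Txa); last apply: Tby ];
  try by rewrite /toggle ?eqxx ?ne ?fa ?fb -?fxy; case: (f x).
all: move=> z; rewrite Dg /toggle.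
all: by case: (z == x); case: (z == a); case: (z == b); case: (z == y); case: (f z).
Qed.

Lemma togglable_odd_symdiff x y : odd #|symdiff x y| -> togglable x y.
Proof.
move=> odd_xy.
have {odd_xy} : #|symdiff x y| = (#|symdiff x y|./2).*2.+1.
  by rewrite -[LHS]odd_double_half odd_xy.
move: (_./2) => n; elim: n x y => [|n IH] x y dxy.
  have /cards1P[l /symdiff_set1_flip ->] : #|symdiff x y| == 1 by rewrite dxy.
  exact: togglable_flip.
have [l lxy] : exists l, l \in symdiff x y by apply/set0Pn; rewrite -card_gt0 dxy.
set a := flip x l.
have day : #|symdiff a y| = n.*2.+2 by rewrite symdiff_flipl card_flip lxy dxy.
have [l' lay] : exists l', l' \in symdiff a y by apply/set0Pn; rewrite -card_gt0 day.
set b := flip a l'.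
have dby : #|symdiff b y| = n.*2.+1 by rewrite symdiff_flipl card_flip lay day.
apply: (@togglable_chain x a b y).
- (* The distances of x, a, b, y to y are 2n+3, 2n+2, 2n+1, 0. *)
  apply: (@map_uniq _ _ (fun u => #|symdiff u y|)).
  rewrite /= dxy day dby symdiffxx cards0 /= !inE; lia.
- exact: togglable_flip.
- exact: togglable_flip.
- exact: IH.
Qed.

Lemma sat_toggle_true f x : f x -> sat (toggle f x) = sat f :\ x.
Proof.
by move=> fx; apply/setP=> z; rewrite !inE /toggle; case: eqVneq => [->|]; rewrite ?fx.
Qed.

Lemma eul_toggle_true f x : f x -> eul (toggle f x) = (eul f - (-1) ^+ #|x|)%R.
Proof.
move=> fx; rewrite /eul sat_toggle_true // [in RHS](big_setD1 x) ?inE //=.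
by rewrite addrAC subrr add0r.
Qed.

Lemma eul_eq0_opposite_parity f x : eul f = 0%R -> x \in sat f ->
  exists2 y, y \in sat f & odd #|y| != odd #|x|.
Proof.
move=> eul0 xf; case: (pickP [pred y in sat f | odd #|y| != odd #|x|]).
  by move=> y /andP[]; exists y.
move=> same; suff : eul f = ((-1) ^+ #|x| *+ #|sat f|)%R.
  rewrite eul0 => /eqP; rewrite eq_sym mulrn_eq0 signr_eq0 orbF cards_eq0 => /eqP sat0.
  by rewrite sat0 inE in xf.
rewrite /eul -sumr_const; apply: eq_bigr => y yf.
by rewrite -signr_odd -[in RHS]signr_odd; have := same y; rewrite /= yf => /negbFE/eqP ->.
Qed.

Lemma sat0_bequiv_bot f : sat f = set0 -> bequiv f (@bot k).
Proof.
move=> /setP sat0; have f0 z : f z = false by have := sat0 z; rewrite !inE.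
set u : {set V} := set0; have vu : flip u ord0 != u := flip_neq u ord0.
apply: (bequiv_toggle_trans (@togglable_flip u ord0)); first by rewrite !f0.
apply: (@togglable_flip u ord0); first by rewrite /toggle !eqxx eq_sym (negbTE vu) !f0.
by move=> z; rewrite /toggle f0; case: (z == u); case: (z == flip u ord0).
Qed.

Lemma eul0_bequiv_bot n f : #|sat f| <= n -> eul f = 0%R -> bequiv f (@bot k).
Proof.
elim: n f => [|n IH] f satn eul0.
  by apply: sat0_bequiv_bot; apply/eqP; rewrite -cards_eq0 -leqn0.
have [sat0|[x xf]] := set_0Vmem (sat f); first exact: sat0_bequiv_bot.
have [y yf xy_odd] := eul_eq0_opposite_parity eul0 xf.
have yx : y != x by apply: contraNneq xy_odd => ->.
have [fx fy] : f x /\ f y by rewrite !inE in xf yf.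
have fxy : toggle f x y by rewrite /toggle (negbTE yx).
apply: (bequiv_toggle_trans (@togglable_odd_symdiff x y _)); last apply: IH.
- by rewrite odd_card_symdiff; move: xy_odd; case: (odd _); case: (odd _).
- by rewrite fx fy.
- rewrite (sat_toggle_true fxy) (sat_toggle_true fx).
  by move: satn; rewrite (cardsD1 x) (cardsD1 y (sat f :\ x)) !inE yx fx fy !add1n ltnS => /ltnW.
- rewrite (eul_toggle_true fxy) (eul_toggle_true fx) eul0 sub0r -opprD.
  by rewrite add_signr_odd_neq ?oppr0 // eq_sym.
Qed.

End Toggling.

Theorem proposition5p9 (k : nat) (hk : (1 <= k)%N) (phi : bfun k) :
  eul phi = 0%R -> bequiv phi (@bot k).
Proof.
exact: eul0_bequiv_bot (leqnn _).
Qed.
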